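(* Let $a\ge b\ge2$ and $k$ be integers with $a+b+1\le k\le a+2b-1$. Then for every $(i,j)\in\overline{Q}_3$ we have $w_1,w_4,w_6\in\mathcal{R}^k_{(a,b),(i,j)}$.
   Context: $\widehat{\mathfrak{su}}(3)_k$ fusion. Let $P_+^k=\{(\lambda_1,\lambda_2)\in\mathbb{Z}_{\ge0}^2:\lambda_1+\lambda_2\le k\}$. For $\lambda,\mu,\nu\in P_+^k$ set - $\mathcal{A}=\tfrac13[2(\lambda_1+\mu_1+\nu_2)+\lambda_2+\mu_2+\nu_1]$, - $\mathcal{B}=\tfrac13[\lambda_1+\mu_1+\nu_2+2(\lambda_2+\mu_2+\nu_1)]$, - $k_0^{\max}=\min(\mathcal{A},\mathcal{B})$, - $k_0^{\min}=\max(\lambda_1+\lambda_2,\mu_1+\mu_2,\nu_1+\nu_2,\mathcal{A}-\lambda_1,\mathcal{A}-\mu_1,\mathcal{A}-\nu_2,\mathcal{B}-\lambda_2,\mathcal{B}-\mu_2,\mathcal{B}-\nu_1)$. The fusion multiplicity is $N^{(k)\nu}_{\lambda,\mu}=\min(k_0^{\max},k)-k_0^{\min}+1$ if $\mathcal{A},\mathcal{B}$ are nonnegative integers, $k_0^{\max}\ge k_0^{\min}$ and $k\ge k_0^{\min}$; otherwise it is $0$. The set $\mathcal{R}^k_{\lambda,\mu}$ is $\{\nu\in P_+^k:N^{(k)\nu}_{\lambda,\mu}\ne0\}$. The candidate weights are $w_1=(a-1,b+2)$, $w_2=(a+2,b-1)$, $w_3=(a+1,b-2)$, $w_4=(a-2,b+1)$,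 $w_5=(a+1,b+1)$, $w_6=(a-1,b-1)$. The set $\overline{Q}_3$ is defined by $\overline{Q}_3=\{(p+k-a-b,p-2k+2a+2b):p\in\mathbb{Z},\ 2k-2a-2b\le p\le k-a-1\}$. *)

From Stdlib Require Import ZArith Bool.
Open Scope Z_scope.

(* Dominant weights of su(3) at level k: P_+^k *)
Definition in_Pplus (k : Z) (l : Z * Z) : Prop :=
  0 <= fst l /\ 0 <= snd l /\ fst l + snd l <= k.

Definition A3 (l m n : Z * Z) : Z :=
  2 * (fst l + fst m + snd n) + snd l + snd m + fst n.
Definition B3 (l m n : Z * Z) : Z :=
  fst l + fst m + snd n + 2 * (snd l + snd m + fst n).

(* Fusion multiplicity N^{(k) nu}_{lambda, mu}.  A = A3/3, B = B3/3 are
   nonnegative integers iff 3 divides A3, B3 and A3, B3 >= 0. *)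
Definition fusion_mult (k : Z) (l m n : Z * Z) : Z :=
  let a3 := A3 l m n in
  let b3 := B3 l m n in
  if (a3 mod 3 =? 0) && (b3 mod 3 =? 0) && (0 <=? a3) && (0 <=? b3) then
    let A := a3 / 3 in
    let B := b3 / 3 in
    let kmax := Z.min A B in
    let kmin :=
      Z.max (fst l + snd l) (Z.max (fst m + snd m) (Z.max (fst n + snd n)
      (Z.max (A - fst l) (Z.max (A - fst m) (Z.max (A - snd n)
      (Z.max (B - snd l) (Z.max (B - snd m) (B - fst n)))))))) in
    if (kmin <=? kmax) && (kmin <=? k) then Z.min kmax k - kmin + 1 else 0
  else 0.

Definition in_R (k : Z) (l m n : Z * Z) : Prop :=
  in_Pplus k n /\ fusion_mult k l m n <> 0.

Definition in_Q3bar (k a b : Z) (ij : Z * Z) : Prop :=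
  exists p : Z, 2 * k - 2 * a - 2 * b <= p /\ p <= k - a - 1 /\
    ij = (p + k - a - b, p - 2 * k + 2 * a + 2 * b).

Definition w1 (a b : Z) : Z * Z := (a - 1, b + 2).
Definition w4 (a b : Z) : Z * Z := (a - 2, b + 1).
Definition w6 (a b : Z) : Z * Z := (a - 1, b - 1).

(* Each of the three weights lies in P_+^k, and for (i,j) = (p+k-a-b, p-2k+2a+2b)
   the quantities A and B are explicit integers in p (for w1: A = a+b+1+p and
   B = 2a+2b+p-k); the bounds on p, a, b and k then put every lower bound in the
   definition of k_0^min below both k_0^max and k, so the multiplicity is positive. *)
From Stdlib Require Import ZArith Lia.
Open Scope Z_scope.

Definition fusion_kmin (l m n : Z * Z) (A B : Z) : Z :=
  Z.max (fst l + snd l) (Z.max (fst m + snd m) (Z.max (fst n + snd n)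
  (Z.max (A - fst l) (Z.max (A - fst m) (Z.max (A - snd n)
  (Z.max (B - snd l) (Z.max (B - snd m) (B - fst n)))))))).

Lemma fusion_multE (k : Z) (l m n : Z * Z) (A B : Z) :
  A3 l m n = 3 * A -> B3 l m n = 3 * B -> 0 <= A -> 0 <= B ->
  fusion_kmin l m n A B <= Z.min A B -> fusion_kmin l m n A B <= k ->
  fusion_mult k l m n = Z.min (Z.min A B) k - fusion_kmin l m n A B + 1.
Proof.
  intros HA HB A_ge0 B_ge0 kmin_le_kmax kmin_le_k.
  unfold fusion_mult; rewrite HA, HB.
  rewrite !(Z.mul_comm 3), !Z_mod_mult, !Z_div_mult by lia.
  fold (fusion_kmin l m n A B).
  replace (0 <=? A * 3) with true by (symmetry; apply Z.leb_le; lia).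
  replace (0 <=? B * 3) with true by (symmetry; apply Z.leb_le; lia).
  apply Z.leb_le in kmin_le_kmax, kmin_le_k.
  now rewrite kmin_le_kmax, kmin_le_k.
Qed.

Lemma in_R_intro (k : Z) (l m n : Z * Z) (A B : Z) :
  in_Pplus k n ->
  A3 l m n = 3 * A -> B3 l m n = 3 * B -> 0 <= A -> 0 <= B ->
  fusion_kmin l m n A B <= Z.min A B -> fusion_kmin l m n A B <= k ->
  in_R k l m n.
Proof.
  intros Hn HA HB A_ge0 B_ge0 kmin_le_kmax kmin_le_k.
  split; [exact Hn|].
  rewrite (fusion_multE k l m n A B) by assumption; lia.
Qed.

Section Q3bar.

Variables a b k p : Z.
Hypotheses (b_le_a : b <= a) (b_ge2 : 2 <= b)
  (k_ge : a + b + 1 <= k) (k_le : k <= a + 2 * b - 1)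
  (p_ge : 2 * k - 2 * a - 2 * b <= p) (p_le : p <= k - a - 1).

Let i := p + k - a - b.
Let j := p - 2 * k + 2 * a + 2 * b.

Ltac fusion_arith :=
  unfold in_Pplus, A3, B3, fusion_kmin, w1, w4, w6, i, j; cbn [fst snd]; lia.

Lemma Q3bar_w1 : in_R k (a, b) (i, j) (w1 a b).
Proof. apply (in_R_intro _ _ _ _ (a + b + 1 + p) (2 * a + 2 * b + p - k)); fusion_arith. Qed.

Lemma Q3bar_w4 : in_R k (a, b) (i, j) (w4 a b).
Proof. apply (in_R_intro _ _ _ _ (a + b + p) (2 * a + 2 * b + p - k - 1)); fusion_arith. Qed.

Lemma Q3bar_w6 : in_R k (a, b) (i, j) (w6 a b).
Proof. apply (in_R_intro _ _ _ _ (a + b + p - 1) (2 * a + 2 * b + p - k - 1)); fusion_arith. Qed.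

End Q3bar.

Theorem mainTheorem12 (a b k : Z) :
  b <= a -> 2 <= b -> a + b + 1 <= k -> k <= a + 2 * b - 1 ->
  forall i j : Z, in_Q3bar k a b (i, j) ->
    in_R k (a, b) (i, j) (w1 a b) /\
    in_R k (a, b) (i, j) (w4 a b) /\
    in_R k (a, b) (i, j) (w6 a b).
Proof.
  intros b_le_a b_ge2 k_ge k_le i j [p [p_ge [p_le Eij]]].
  injection Eij as -> ->.
  split; [|split]; [apply Q3bar_w1 | apply Q3bar_w4 | apply Q3bar_w6]; assumption.
Qed.
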